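(* Let $k\geq 1$ and let $G$ be a $k$-degenerate graph on $n\geq 1$ vertices. Then $pdim(G) \leq \lceil 8.317\, k \log_2 n\rceil + 1$.
   Context: A graph $G$ is $k$-degenerate if its vertices admit an ordering $v_1,\dots,v_n$ such that each $v_i$ has at most $k$ neighbours among $\{v_j : j<i\}$. For a graph $G=(V,E)$ and $l\in\mathbb{N}$, an $l$-encoding of $G$ is an injective function $\phi: V\to\mathbb{N}^l$ such that for all $u,v\in V$, $\{u,v\}\in E$ if and only if $\phi(u)$ and $\phi(v)$ differ in all $l$ coordinates. The product dimension $pdim(G)$ is the minimum $l$ such that an $l$-encoding of $G$ exists. *)

From mathcomp Require Import all_boot.
From Stdlib Require Import Reals.
Set Implicit Arguments. Unset Strict Implicit. Unset Printing Implicit Defensive.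

Definition simple_graph (T : finType) (e : rel T) : Prop :=
  symmetric e /\ irreflexive e.

Definition degenerate (T : finType) (e : rel T) (k : nat) : Prop :=
  exists s : seq T, perm_eq s (enum T) /\
    forall x : T, count (e x) (take (index x s) s) <= k.

Definition encoding (T : finType) (e : rel T) (l : nat)
    (phi : T -> l.-tuple nat) : Prop :=
  injective phi /\
  forall u v : T, e u v <-> (forall i : 'I_l, tnth (phi u) i != tnth (phi v) i).

(* pdim(G) <= m, where pdim(G) is the minimum l admitting an l-encoding:
   i.e. some l <= m admits an l-encoding. *)
Definition pdim_le (T : finType) (e : rel T) (m : nat) : Prop :=
  exists l : nat, l <= m /\ exists phi : T -> l.-tuple nat, encoding e phi.

Definition Rceil (x : R) : Z := (- Int_part (- x))%Z.

Definition log2R (x : R) : R := (ln x / ln 2)%R.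

(* Fix a degeneracy order of the
   vertices and a palette of m = 3k + k/2 + 1 colours.  Colour the vertices in
   order, each one choosing a uniform colour among those not used by its at
   most k earlier neighbours; such a colouring is always proper.  Resampling
   the choice of the later vertex shows that two distinct vertices agree with
   probability at most 1/(m-k), and two distinct non-adjacent ones with
   probability at least (m-2k)/((m-k)(m-1)) >= 0.17/k.  By the first-moment
   method, L = ceil(8.317 k log2 n) independent colourings make every non-edge
   monochromatic in at least one of them, because n(n-1)(1 - 0.17/k)^L < 1
   (this uses ln 2 < 0.706).  These L colourings together with the position in
   the order as a last, injective coordinate form an (L + 1)-encoding.

   Probabilities are counted exactly: a colouring is driven by a seed in
   'I_(m!) per vertex, so that a uniform choice from any set of at most m
   colours is obtained by reducing the seed. *)

From mathcomp Require Import all_boot.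
From Stdlib Require Import Reals ZArith Lra Lia.
From mathcomp Require Import zify.

Set Implicit Arguments. Unset Strict Implicit. Unset Printing Implicit Defensive.

(* Importing Reals rebinds [^] on nat to [Nat.pow]; restore MathComp's [expn]. *)
Local Notation "m ^ n" := (expn m n) : nat_scope.

Lemma card_residue_class (N a j : nat) : 0 < a -> a %| N -> j < a ->
  #|[set i : 'I_N | i %% a == j]| = N %/ a.
Proof.
move=> a_gt0 a_dvd j_lt.
have aK : N %/ a * a = N by rewrite divnK.
have lift_lt (t : 'I_(N %/ a)) : t * a + j < N.
  by move: (ltn_ord t) aK; move: (N %/ a) t => q t; nia.
pose f (t : 'I_(N %/ a)) : 'I_N := Ordinal (lift_lt t).
have f_inj : injective f.
  by move=> t1 t2 /(congr1 val) /= eq12; apply: val_inj => /=; nia.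
rewrite -[RHS]card_ord -(card_imset (mem 'I_(N %/ a)) f_inj).
apply: eq_card => i; rewrite !inE; apply/eqP/imsetP => [i_mod | [t _ ->]].
  have q_lt : i %/ a < N %/ a by rewrite ltn_divLR // aK.
  by exists (Ordinal q_lt) => //; apply: val_inj; rewrite /= -i_mod -divn_eq.
by rewrite /= modnMDl modn_small.
Qed.

Section UniformChoice.
Variables (X : finType) (x0 : X) (N : nat).

Definition pick (A : {set X}) (i : 'I_N) : X := nth x0 (enum A) (i %% #|A|).

Lemma pick_in (A : {set X}) i : 0 < #|A| -> pick A i \in A.
Proof. by move=> A_gt0; rewrite -mem_enum mem_nth // -cardE ltn_mod. Qed.

Lemma card_pick (A : {set X}) y : 0 < #|A| -> #|A| %| N ->
  #|[set i : 'I_N | pick A i == y]| = if y \in A then N %/ #|A| else 0.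
Proof.
move=> A_gt0 A_dvd; case: ifPn => [yA | yNA]; last first.
  apply/eqP; rewrite cards_eq0; apply/eqP/setP => i; rewrite !inE.
  by apply: contraNF yNA => /eqP <-; apply: pick_in.
have iy_lt : index y (enum A) < #|A| by rewrite cardE index_mem mem_enum.
rewrite -(card_residue_class A_gt0 A_dvd iy_lt); apply: eq_card => i.
rewrite !inE /pick -{1}(nth_index x0 (_ : y \in enum A)) ?mem_enum //.
rewrite nth_uniq ?enum_uniq // -?cardE ?ltn_mod //.
Qed.

End UniformChoice.

Definition upd (A X : finType) (r : {ffun A -> X}) (v : A) (x : X) : {ffun A -> X} :=
  [ffun w => if w == v then x else r w].

(* Re-drawing one coordinate of a uniform random function keeps it uniform:
   summing [F] over all [r] equals the average of [F (upd r v x)] over [r, x]. *)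
Lemma resample_sum (A X : finType) (F : {ffun A -> X} -> nat) (v : A) :
  #|X| * \sum_r F r = \sum_r \sum_(x : X) F (upd r v x).
Proof.
pose h (p : {ffun A -> X} * X) := (upd p.1 v p.2, p.1 v).
have h_inj : injective h.
  move=> [r1 x1] [r2 x2] [/ffunP eq_r eq_rv].
  have ex : x1 = x2 by have := eq_r v; rewrite !ffunE eqxx.
  subst x2; congr pair; apply/ffunP => w.
  by have := eq_r w; rewrite !ffunE; case: eqP => [-> _ | _]; first exact: eq_rv.
rewrite (pair_bigA _ (fun r x => F (upd r v x))) (reindex_inj h_inj) /=.
rewrite -(pair_bigA _ (fun r x => F (upd (upd r v x) v (r v)))) big_distrr /=.
apply: eq_bigr => r _; rewrite -sum_nat_const; apply: eq_bigr => x _.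
by congr F; apply/ffunP => w; rewrite !ffunE; case: eqP => [-> | _].
Qed.

Lemma card_set_sum (I : finType) (P : pred I) : #|[set i | P i]| = \sum_i P i.
Proof. by rewrite -sum1dep_card big_mkcond; apply: eq_bigr => i _; case: (P i). Qed.

Lemma sum_indicator_compl (I : finType) (P : pred I) :
  \sum_i P i + \sum_i ~~ P i = #|I|.
Proof.
rewrite -big_split -sum1_card big_mkcond /=.
by apply: eq_bigr => i _; case: (P i).
Qed.

Lemma leq_scale_div (N d a b : nat) : 0 < N -> d %| N ->
  N * a <= b * (N %/ d) -> d * a <= b.
Proof.
move=> N_gt0 /dvdnP [q eqN]; move: N_gt0; rewrite eqN muln_gt0 => /andP [q_gt0 d_gt0].
by rewrite mulnK // => le_ab; rewrite -(leq_pmul2l q_gt0) mulnA (mulnC q b).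
Qed.

Lemma geq_scale_div (N d a b : nat) : 0 < N -> d %| N ->
  b * (N %/ d) <= N * a -> b <= d * a.
Proof.
move=> N_gt0 /dvdnP [q eqN]; move: N_gt0; rewrite eqN muln_gt0 => /andP [q_gt0 d_gt0].
by rewrite mulnK // => le_ab; rewrite -(leq_pmul2l q_gt0) mulnA (mulnC q b).
Qed.

Lemma card_offdiag_le (T : finType) (B : pred (T * T)) :
  (forall p, B p -> p.1 != p.2) -> #|[set p | B p]| <= #|T| * (#|T| - 1).
Proof.
move=> B_off; rewrite card_set_sum.
apply: (@leq_trans (\sum_(p : T * T) (p.1 != p.2))).
  by apply: leq_sum => p _; case Bp: (B p); rewrite // B_off.
rewrite -(pair_bigA _ (fun u v => (u != v : nat))) /= -sum_nat_const.
apply: leq_sum => u _; rewrite -card_set_sum subn1 -(cardsC1 u).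
by apply: subset_leq_card; apply/subsetP => v; rewrite !inE eq_sym.
Qed.

(* First-moment method: if the "bad" events [~~ P i r] (for [i] in [B]) are
   rare enough, some [L] samples witness [P i] for every [i] in [B] at once,
   since [#|S| ^ L] counts the [L]-tuples of samples all lying in [S]. *)
Lemma first_moment (Omega I : finType) (B : pred I) (P : I -> pred Omega) (L : nat) :
  \sum_(i | B i) #|[set r | ~~ P i r]| ^ L < #|Omega| ^ L ->
  exists R : {ffun 'I_L -> Omega}, forall i, B i -> exists j, P i (R j).
Proof.
pose good (R : {ffun 'I_L -> Omega}) := [forall i, B i ==> [exists j, P i (R j)]].
have [R /forallP goodR | no_good] := pickP good.
  by exists R => i Bi; have /existsP := implyP (goodR i) Bi.
rewrite ltnNge => /negP []; rewrite -[L in #|Omega| ^ L]card_ord -card_ffun -sum1_card.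
have all_bad i : #|[set R : {ffun 'I_L -> Omega} | [forall j, ~~ P i (R j)]]|
                 = #|[set r | ~~ P i r]| ^ L.
  rewrite -[L in _ ^ L]card_ord -card_ffun_on; apply: eq_card => R.
  rewrite !inE; apply/forallP/ffun_onP => [allR j | onR j]; first by rewrite inE.
  by have := onR j; rewrite inE.
under [X in _ <= X]eq_bigr => i _ do rewrite -all_bad -sum1dep_card.
rewrite (exchange_big_dep xpredT) //=; apply: leq_sum => R _.
move/negbT: (no_good R); rewrite negb_forall => /existsP [i].
rewrite negb_imply negb_exists => /andP [Bi badR].
by rewrite (bigD1 i) ?Bi.
Qed.

Lemma encoding_of_colourings (T : finType) (e : rel T) (L : nat)
    (c : 'I_L -> T -> nat) (label : T -> nat) :
  irreflexive e -> injective label ->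
  (forall i u v, e u v -> c i u != c i v) ->
  (forall u v, u != v -> ~~ e u v -> exists i, c i u = c i v) ->
  exists phi : T -> (L + 1).-tuple nat, encoding e phi.
Proof.
move=> e_irr label_inj c_proper c_merge.
pose coord v (j : 'I_(L + 1)) := if fintype.split j is inl i then c i v else label v.
have coord_lab v : coord v (rshift L ord0) = label v.
  by rewrite /coord (unsplitK (inr _ : 'I_L + 'I_1)).
have coord_col v i : coord v (lshift 1 i) = c i v.
  by rewrite /coord (unsplitK (inl _ : 'I_L + 'I_1)).
exists (fun v => [tuple coord v j | j < L + 1]); split.
  move=> u v /(congr1 (fun t => tnth t (rshift L ord0))).
  by rewrite !tnth_mktuple !coord_lab => /label_inj.
move=> u v; split=> [uv j | differ]; rewrite ?tnth_mktuple.
  rewrite /coord; case: fintype.split => [i | _]; first exact: c_proper.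
  by apply: contraTneq uv => /label_inj ->; rewrite e_irr.
apply/negPn/negP => uNv; have [u_eq_v | u_neq_v] := eqVneq u v.
  by have := differ (rshift L ord0); rewrite u_eq_v eqxx.
have [i ci] := c_merge u v u_neq_v uNv.
by have := differ (lshift 1 i); rewrite !tnth_mktuple !coord_col ci eqxx.
Qed.

(* Seeds range over ['I_N] with [N = m`!], so that uniform choice
   from any nonempty set of at most [m] colours is exact. *)
Section RandomGreedyColouring.
Variables (T : finType) (e : rel T) (s : seq T) (k m' : nat).
Hypothesis e_sym : symmetric e.
Hypothesis e_irr : irreflexive e.
Hypothesis s_perm : perm_eq s (enum T).
Hypothesis s_degen : forall x, count (e x) (take (index x s) s) <= k.
Hypothesis k_lt_m : k < m'.+1.

Let m := m'.+1.
Let N := m`!.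
Local Notation Seed := {ffun T -> 'I_N}.

Definition pos (x : T) : nat := index x s.

Lemma pos_inj : injective pos.
Proof.
have s_all x : x \in s by rewrite (perm_mem s_perm) mem_enum.
by move=> x y; apply: (index_inj x (s_all x) (s_all y)).
Qed.

Definition earlier (x : T) : {set T} := [set w | e x w && (pos w < pos x)].

Lemma card_earlier x : #|earlier x| <= k.
Proof.
apply: leq_trans (s_degen x).
have s_uniq : uniq s by rewrite (perm_uniq s_perm) enum_uniq.
have earlierE : earlier x =i [seq w <- take (pos x) s | e x w].
  by move=> w; rewrite !inE mem_filter in_take // (perm_mem s_perm) mem_enum.
by rewrite (eq_card earlierE) (card_uniqP _) ?size_filter // filter_uniq // take_uniq.
Qed.

Definition avail (f : T -> 'I_m) (x : T) : {set 'I_m} := ~: (f @: earlier x).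

Lemma avail_ext (f g : T -> 'I_m) x :
  {in earlier x, f =1 g} -> avail f x = avail g x.
Proof. by move=> fg; rewrite /avail (eq_in_imset fg). Qed.

Lemma card_avail f x : m - k <= #|avail f x| <= m.
Proof.
rewrite /avail cardsCs setCK card_ord leq_subr andbT leq_sub2l //.
exact: leq_trans (leq_imset_card _ _) (card_earlier x).
Qed.

Lemma avail_gt0 f x : 0 < #|avail f x|.
Proof. by have /andP [+ _] := card_avail f x; apply: leq_trans; rewrite subn_gt0. Qed.

(* Uniform choice from available colours is exact since their number divides [N]. *)
Lemma card_pick_avail f x y : #|[set i : 'I_N | pick ord0 (avail f x) i == y]| =
  if y \in avail f x then N %/ #|avail f x| else 0.
Proof.
have /andP [_ le_m] := card_avail f x.
by rewrite card_pick ?avail_gt0 // dvdn_fact // avail_gt0.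
Qed.

Definition greedy_on (r : Seed) (c : T -> 'I_m) (i : nat) : Prop :=
  forall x, pos x < i -> c x = pick ord0 (avail c x) (r x).

Lemma greedy_exists (r : Seed) i : i <= size s -> {c | greedy_on r c i}.
Proof.
elim: i => [|i IH] i_le; first by exists (fun=> ord0).
have [c c_ok] := IH (ltnW i_le).
have y0 : T by move: i_le; case: (s) => [|y0 l]; [rewrite ltn0 | move=> _; exact: y0].
pose y := nth y0 s i.
have pos_y : pos y = i by rewrite /pos index_uniq // (perm_uniq s_perm) enum_uniq.
pose c' x := if x == y then pick ord0 (avail c y) (r y) else c x.
have avail_c' z : pos z <= i -> avail c' z = avail c z.
  move=> z_le; apply: avail_ext => w; rewrite inE /c' => /andP [_ w_lt].
  by case: eqP => // w_y; have := leq_trans w_lt z_le; rewrite w_y pos_y ltnn.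
exists c' => x x_lt; rewrite avail_c' // /c'.
case: eqP => [-> // | x_neq_y]; apply: c_ok.
by rewrite ltn_neqAle -ltnS x_lt andbT -pos_y (eqtype.inj_eq pos_inj); apply/eqP.
Qed.

Definition col (r : Seed) : T -> 'I_m := sval (greedy_exists r (leqnn (size s))).

Lemma colE r x : col r x = pick ord0 (avail (col r) x) (r x).
Proof.
rewrite /col; case: greedy_exists => c c_ok /=; apply: c_ok.
by rewrite /pos index_mem (perm_mem s_perm) mem_enum.
Qed.

Lemma col_local (r r' : Seed) x :
  (forall w, pos w <= pos x -> r w = r' w) -> col r x = col r' x.
Proof.
elim/ltn_ind: (pos x) {-2}x (erefl (pos x)) => n IH {}x pos_x same.
rewrite colE [RHS]colE same ?pos_x //; congr pick; apply: avail_ext => w.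
rewrite inE => /andP [_ w_lt]; apply: (IH (pos w)) => [|//|w' w'_le].
  by rewrite -pos_x.
by apply: same; rewrite (leq_trans w'_le) // ltnW.
Qed.

Lemma col_proper r u v : e u v -> col r u != col r v.
Proof.
wlog lt_uv : u v / pos u < pos v.
  move=> W uv; case: (ltngtP (pos u) (pos v)) => [lt_uv|lt_vu|/pos_inj eq_uv].
  - exact: W.
  - by rewrite eq_sym; apply: W; rewrite // e_sym.
  - by move: uv; rewrite eq_uv e_irr.
move=> uv; rewrite [col r v]colE.
have := pick_in ord0 (r v) (avail_gt0 (col r) v).
rewrite inE; apply: contra => /eqP <-; apply: imset_f.
by rewrite inE e_sym uv lt_uv.
Qed.

Lemma col_upd_before r v x w : pos w < pos v -> col (upd r v x) w = col r w.
Proof.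
move=> w_lt; apply: col_local => w' w'_le; rewrite ffunE.
by case: eqP => // eq_w'; move: (leq_ltn_trans w'_le w_lt); rewrite eq_w' ltnn.
Qed.

Lemma col_upd_at r v x : col (upd r v x) v = pick ord0 (avail (col r) v) x.
Proof.
rewrite colE ffunE eqxx; congr pick; apply: avail_ext => w.
by rewrite inE => /andP [_ w_lt]; rewrite col_upd_before.
Qed.

Definition agree (y z : T) : nat := \sum_(r : Seed) (col r y == col r z).
Definition hits (y z : T) : nat := \sum_(r : Seed) (col r y \in avail (col r) z).
Definition misses (y z : T) : nat := \sum_(r : Seed) (col r y \notin avail (col r) z).

Lemma agree_sym y z : agree y z = agree z y.
Proof. by apply: eq_bigr => r _; rewrite eq_sym. Qed.

Lemma N_gt0 : 0 < N. Proof. exact: fact_gt0. Qed.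

(* Resampling the seed of the later vertex [z]: the colour of [z] becomes a
   uniform pick from its available colours, the colour of [y] is unchanged. *)
Lemma agree_resample y z : pos y < pos z ->
  N * agree y z
  = \sum_(r : Seed) (col r y \in avail (col r) z) * (N %/ #|avail (col r) z|).
Proof.
move=> lt_yz; rewrite /agree -{1}[N]card_ord (resample_sum _ z).
apply: eq_bigr => r _.
transitivity #|[set x : 'I_N | pick ord0 (avail (col r) z) x == col r y]|.
  rewrite card_set_sum; apply: eq_bigr => x _.
  by rewrite col_upd_before // col_upd_at eq_sym.
by rewrite card_pick_avail; case: (_ \in _); rewrite ?mul1n.
Qed.

Lemma agree_upper y z : y != z -> (m - k) * agree y z <= #|Seed|.
Proof.
wlog lt_yz : y z / pos y < pos z.
  move=> W yz; case: (ltngtP (pos y) (pos z)) => [lt_yz|lt_zy|/pos_inj eq_yz].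
  - exact: W.
  - by rewrite agree_sym; apply: W; rewrite // eq_sym.
  - by rewrite eq_yz eqxx in yz.
move=> _; have mk_gt0 : 0 < m - k by rewrite subn_gt0.
apply: (leq_scale_div N_gt0); first by rewrite dvdn_fact // mk_gt0 leq_subr.
rewrite agree_resample // -sum_nat_const leq_sum // => r _.
have /andP [mk_le _] := card_avail (col r) z.
by case: (_ \in _); rewrite ?mul1n ?mul0n // leq_div2l.
Qed.

(* If [v] has no earlier neighbour, its colour is uniform among all [m]. *)
Lemma agree_isolated u v : pos u < pos v -> earlier v = set0 ->
  #|Seed| <= m * agree u v.
Proof.
move=> lt_uv earlier0; apply: (geq_scale_div N_gt0); first by apply: dvdn_fact; rewrite leqnn.
have availT r : avail (col r) v = setT by rewrite /avail earlier0 imset0 setC0.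
rewrite agree_resample // -sum_nat_const; apply: leq_sum => r _.
by rewrite availT in_setT cardsT card_ord mul1n.
Qed.

(* Otherwise at most [m - 1] colours are available to [v], so a colour of [u]
   that is still available is taken by [v] with probability at least [1 / (m - 1)]. *)
Lemma hits_upper u v : pos u < pos v -> earlier v != set0 ->
  hits u v <= (m - 1) * agree u v.
Proof.
move=> lt_uv earlier_ne0.
have m1_gt0 : 0 < m - 1.
  have := card_earlier v; have : 0 < #|earlier v| by rewrite card_gt0.
  by move: k_lt_m; rewrite /m; lia.
apply: (geq_scale_div N_gt0); first by rewrite dvdn_fact // m1_gt0 leq_subr.
rewrite agree_resample // big_distrl leq_sum // => r _ /=.
case: (_ \in _); rewrite ?mul1n ?mul0n // leq_div2l ?avail_gt0 //.
rewrite /avail cardsCs setCK card_ord leq_sub2l //.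
by rewrite card_gt0 imset_eq0.
Qed.

(* Union bound over the at most [k] earlier neighbours [w] of [v]: the colour of
   [u] is unavailable to [v] only if it agrees with some [col r w]. *)
Lemma misses_upper u v : ~~ e u v -> (m - k) * misses u v <= k * #|Seed|.
Proof.
move=> uNv.
have misses_le : misses u v <= \sum_(w in earlier v) agree u w.
  rewrite /misses /agree exchange_big leq_sum // => r _.
  case: (boolP (_ \in _)) => //; rewrite inE negbK => /imsetP [w w_earlier ->].
  by rewrite (bigD1 w) //= eqxx.
apply: leq_trans (leq_mul (leqnn _) misses_le) _; rewrite big_distrr /=.
apply: leq_trans (_ : \sum_(w in earlier v) #|Seed| <= _); last first.
  by rewrite sum_nat_const leq_mul2r card_earlier orbT.
apply: leq_sum => w; rewrite inE => /andP [vw _]; apply: agree_upper.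
by apply: contraNneq uNv => ->; rewrite e_sym.
Qed.

Lemma hits_misses u v : hits u v + misses u v = #|Seed|.
Proof. exact: sum_indicator_compl. Qed.

Lemma agree_lower u v : 0 < k -> 2 * k < m -> u != v -> ~~ e u v ->
  (m - 2 * k) * #|Seed| <= (m - k) * (m - 1) * agree u v.
Proof.
move=> k_gt0 m2k.
wlog lt_uv : u v / pos u < pos v.
  move=> W uv uNv; case: (ltngtP (pos u) (pos v)) => [lt_uv|lt_vu|/pos_inj eq_uv].
  - exact: W.
  - by rewrite agree_sym; apply: W; rewrite // 1?eq_sym // e_sym.
  - by rewrite eq_uv eqxx in uv.
move=> _ uNv.
have [earlier0 | earlier_ne0] := eqVneq (earlier v) set0.
  have := agree_isolated lt_uv earlier0.
  move: (agree u v) (#|Seed|) => a o o_le.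
  have le_m : (m - 2 * k) * m <= (m - k) * (m - 1) by move: m2k; rewrite /m; nia.
  apply: leq_trans (leq_mul (leqnn _) o_le) _; rewrite mulnA leq_mul2r.
  by rewrite le_m orbT.
have := hits_upper lt_uv earlier_ne0; have := misses_upper uNv.
have := hits_misses u v; move: (hits u v) (misses u v) (agree u v) (#|Seed|).
by move: m2k; rewrite /m => m2k h x a o; nia.
Qed.

(* With [D = (m - k)(m - 1)] and [C = D - (m - 2k)], a pair of distinct
   non-adjacent vertices disagrees in at most a fraction [C / D] of the seeds;
   by the first-moment method, [L] seeds making every such pair agree at least
   once exist as soon as [#|T| (#|T| - 1) C ^ L < D ^ L]. *)
Lemma colourings_merge_nonedges (L : nat) : 0 < k -> 2 * k < m ->
  #|T| * (#|T| - 1) * ((m - k) * (m - 1) - (m - 2 * k)) ^ L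
    < ((m - k) * (m - 1)) ^ L ->
  exists R : {ffun 'I_L -> Seed},
    forall u v, u != v -> ~~ e u v -> exists i, col (R i) u = col (R i) v.
Proof.
move=> k_gt0 m2k; set D := (m - k) * (m - 1); set C := D - _ => small.
pose B (p : T * T) := (p.1 != p.2) && ~~ e p.1 p.2.
pose P (p : T * T) (r : Seed) := col r p.1 == col r p.2.
have disagree_le p : B p -> D * #|[set r | ~~ P p r]| <= C * #|Seed|.
  case/andP => uv uNv; have := agree_lower k_gt0 m2k uv uNv.
  have := sum_indicator_compl (P p); rewrite card_set_sum -/(agree _ _) -/D -/C.
  by move: (agree _ _) (\sum_r _) (#|Seed|) => a d o; nia.
have [R goodR] : exists R : {ffun 'I_L -> Seed}, forall p, B p -> exists j, P p (R j).
  have D_gt0 : 0 < D by rewrite muln_gt0 !subn_gt0 k_lt_m /=; move: m2k; rewrite /m; lia.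
  have O_gt0 : 0 < #|Seed| ^ L by rewrite expn_gt0 card_ffun expn_gt0 card_ord N_gt0.
  have DL_gt0 : 0 < D ^ L by rewrite expn_gt0 D_gt0.
  apply: first_moment; rewrite -(ltn_pmul2l DL_gt0) big_distrr /=.
  apply: (@leq_ltn_trans (\sum_(p | B p) (C * #|Seed|) ^ L)).
    apply: leq_sum => p Bp; rewrite -expnMn.
    by case: (posnP L) => [-> | L_gt0]; rewrite ?expn0 // leq_exp2r // disagree_le.
  have -> : \sum_(p | B p) (C * #|Seed|) ^ L = #|[set p | B p]| * (C * #|Seed|) ^ L.
    by rewrite -sum1dep_card big_distrl; apply: eq_bigr => p _; rewrite [RHS]mul1n.
  have B_off p : B p -> p.1 != p.2 by case/andP.
  apply: leq_ltn_trans (leq_mul (card_offdiag_le B_off) (leqnn _)) _.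
  by rewrite expnMn mulnA ltn_pmul2r.
exists R => u v uv uNv.
by have [j /eqP] := goodR (u, v) (introT andP (conj uv uNv)); exists j.
Qed.

End RandomGreedyColouring.

(* ln 2 < 0.706, since squaring [1 + x <= exp x] six times at [x = 0.706/64]
   gives [exp 0.706 >= (1 + 0.706/64) ^ 64 > 2]. *)
Lemma exp_double_ge (y c : R) : (c <= exp y)%R -> (0 <= c)%R -> (c * c <= exp (2 * y))%R.
Proof.
move=> c_le c_ge0; rewrite (_ : 2 * y = y + y)%R; last by ring.
by rewrite exp_plus; apply: Rmult_le_compat.
Qed.

Lemma ln2_lt : (ln 2 < 706 / 1000)%R.
Proof.
pose x := (706 / 1000 / 64)%R; have xE : x = (706 / 1000 / 64)%R by []; clearbody x.
have h0 : (101103125 / 100000000 <= exp x)%R by have := exp_ineq1_le x; lra.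
have h1 : (102218 / 100000 <= exp (2 * x))%R.
  by have := exp_double_ge h0 (ltac:(lra)); lra.
have h2 : (104485 / 100000 <= exp (2 * (2 * x)))%R.
  by have := exp_double_ge h1 (ltac:(lra)); lra.
have h3 : (109171 / 100000 <= exp (2 * (2 * (2 * x))))%R.
  by have := exp_double_ge h2 (ltac:(lra)); lra.
have h4 : (119183 / 100000 <= exp (2 * (2 * (2 * (2 * x)))))%R.
  by have := exp_double_ge h3 (ltac:(lra)); lra.
have h5 : (142045 / 100000 <= exp (2 * (2 * (2 * (2 * (2 * x))))))%R.
  by have := exp_double_ge h4 (ltac:(lra)); lra.
have h6 := exp_double_ge h5 (ltac:(lra)).
rewrite (_ : 706 / 1000 = 2 * (2 * (2 * (2 * (2 * (2 * x))))))%R; last by rewrite xE; field.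
by rewrite -[X in (_ < X)%R]ln_exp; apply: ln_increasing; lra.
Qed.

Lemma pow_one_minus_le_exp (p : R) (L : nat) :
  (p <= 1)%R -> ((1 - p) ^ L <= exp (- (p * INR L)))%R.
Proof.
move=> p_le1; have -> : exp (- (p * INR L)) = (exp (- p) ^ L)%R.
  elim: L => [|L IH]; first by rewrite Rmult_0_r Ropp_0 exp_0.
  by rewrite S_INR /= -IH -exp_plus; congr exp; ring.
by apply: pow_incr; split; [lra | have := exp_ineq1_le (- p); lra].
Qed.

Lemma square_times_decay_lt1 (n L : nat) (p : R) : 1 <= n -> (p <= 1)%R ->
  (2 * ln (INR n) < p * INR L)%R -> (INR n * INR n * (1 - p) ^ L < 1)%R.
Proof.
move=> n_ge1 p_le1 lt_pL.
have n_gt0 : (0 < INR n)%R by apply: (lt_INR 0); apply/ltP.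
have nn_gt0 : (0 < INR n * INR n)%R by nra.
have inv_nn : (/ (INR n * INR n) = exp (- (2 * ln (INR n))))%R.
  by rewrite exp_Ropp (_ : 2 * ln (INR n) = ln (INR n) + ln (INR n))%R ?exp_plus ?exp_ln //; ring.
have decay : ((1 - p) ^ L < / (INR n * INR n))%R.
  apply: Rle_lt_trans (pow_one_minus_le_exp L p_le1) _.
  by rewrite inv_nn; apply: exp_increasing; lra.
by have := Rmult_lt_compat_l _ _ _ nn_gt0 decay; rewrite Rinv_r; lra.
Qed.

Lemma INR_expn (a b : nat) : INR (a ^ b) = (INR a ^ b)%R.
Proof. by elim: b => [|b IH]; rewrite ?expn0 // expnS mult_INR IH. Qed.

(* With [p k >= 0.17] and [L >= 8.317 k log2 n], [p L >= 1.4139 ln n / ln 2 > 2 ln n]. *)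
Lemma budget_enough (n k L : nat) (p : R) : 2 <= n ->
  (17 / 100 <= p * INR k)%R -> (8317 / 1000 * INR k * log2R (INR n) <= INR L)%R ->
  (2 * ln (INR n) < p * INR L)%R.
Proof.
move=> n_ge2 pk_ge budget.
have ln2_gt0 : (0 < ln 2)%R by rewrite -ln_1; apply: ln_increasing; lra.
have n_gt1 : (1 < INR n)%R by apply: (lt_INR 1); apply/ltP.
have lnn_gt0 : (0 < ln (INR n))%R by rewrite -ln_1; apply: ln_increasing; lra.
have k_ge0 := pos_INR k.
have p_gt0 : (0 < p)%R by nra.
apply: Rlt_le_trans (Rmult_le_compat_l _ _ _ (Rlt_le _ _ p_gt0) budget).
rewrite /log2R -Rmult_assoc -Rmult_assoc.
apply: (Rmult_lt_reg_r (ln 2)) => //; rewrite /Rdiv !Rmult_assoc Rinv_l; last lra.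
have := ln2_lt; nra.
Qed.

Lemma union_bound_small (n k L D E : nat) : 1 <= n -> E <= D -> 0 < D ->
  17 * D <= 100 * k * E -> (8317 / 1000 * INR k * log2R (INR n) <= INR L)%R ->
  n * (n - 1) * (D - E) ^ L < D ^ L.
Proof.
move=> n_ge1 le_ED D_gt0 ratio budget.
have [n1 | n_ge2] := leqP n 1.
  have -> : n = 1 by apply/eqP; rewrite eqn_leq n1.
  by rewrite subnn muln0 mul0n expn_gt0 D_gt0.
apply: leq_ltn_trans (_ : _ <= n * n * (D - E) ^ L) _.
  by rewrite leq_mul2r leq_mul2l leq_subr !orbT.
apply/ltP/INR_lt; rewrite !mult_INR !INR_expn minus_INR; last exact/leP.
have D_pos : (0 < INR D)%R by apply: (lt_INR 0); apply/ltP.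
pose p := (INR E / INR D)%R.
have E_le : (INR E <= INR D)%R by apply/le_INR/leP.
have p_le1 : (p <= 1)%R.
  by apply: (Rmult_le_reg_r (INR D)) => //; rewrite /p /Rdiv Rmult_assoc Rinv_l; lra.
have ratio_R : (17 / 100 <= p * INR k)%R.
  have := le_INR _ _ (elimT leP ratio); rewrite !mult_INR.
  have -> : INR 17 = 17%R by rewrite /=; ring.
  have -> : INR 100 = 100%R by rewrite /=; ring.
  move=> ratio_R; apply: (Rmult_le_reg_r (INR D)) => //.
  have -> : (p * INR k * INR D = INR E * INR k)%R by rewrite /p; field; lra.
  lra.
have := square_times_decay_lt1 n_ge1 p_le1 (budget_enough n_ge2 ratio_R budget).
rewrite (_ : INR D - INR E = INR D * (1 - p))%R; last by rewrite /p; field; lra.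
rewrite Rpow_mult_distr (Rmult_comm (INR D ^ L)) -Rmult_assoc => lt1.
by rewrite -[X in (_ < X)%R]Rmult_1_l; apply: Rmult_lt_compat_r => //; apply: pow_lt.
Qed.

Lemma palette_ratio (k m : nat) : 0 < k -> m = (3 * k + k./2).+1 ->
  17 * ((m - k) * (m - 1)) <= 100 * k * (m - 2 * k).
Proof.
move=> k_gt0 ->; have := odd_double_half k; rewrite -muln2.
move: (k./2) => q; case: (odd k) => /= <-; nia.
Qed.

Lemma Rceil_ge (x : R) : (0 <= x)%R -> (x <= INR (Z.to_nat (Rceil x)))%R.
Proof.
move=> x_ge0; have [lb ub] := base_Int_part (- x).
have ceil_ge0 : (0 <= - Int_part (- x))%Z by apply: le_IZR; rewrite opp_IZR; lra.
by rewrite /Rceil INR_IZR_INZ Z2Nat.id // opp_IZR; lra.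
Qed.

Lemma log2R_ge0 (n : nat) : 1 <= n -> (0 <= log2R (INR n))%R.
Proof.
move=> n_ge1; have ln2_gt0 : (0 < ln 2)%R by rewrite -ln_1; apply: ln_increasing; lra.
apply: Rmult_le_pos; last by apply/Rlt_le/Rinv_0_lt_compat.
have n_ge1R : (1 <= INR n)%R by apply: (le_INR 1); apply/leP.
have [n_gt1R | <-] := Rle_lt_or_eq_dec _ _ n_ge1R; last by rewrite ln_1; lra.
by rewrite -ln_1; apply/Rlt_le/ln_increasing; lra.
Qed.

Theorem theorem3 (T : finType) (e : rel T) (k : nat) :
  simple_graph e -> 1 <= k -> 1 <= #|T| -> degenerate e k ->
  pdim_le e
    (Z.to_nat (Rceil (8317 / 1000 * INR k * log2R (INR #|T|))%R) + 1).
Proof.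
move=> [e_sym e_irr] k_gt0 n_ge1 [s [s_perm s_degen]].
set L := Z.to_nat _; set m := (3 * k + k./2).+1.
have k_lt_m : k < m by rewrite /m; lia.
have m2k : 2 * k < m by rewrite /m; lia.
have budget : (8317 / 1000 * INR k * log2R (INR #|T|) <= INR L)%R.
  apply/Rceil_ge/Rmult_le_pos/(log2R_ge0 n_ge1).
  by apply: Rmult_le_pos; [lra | exact: pos_INR].
have D_gt0 : 0 < (m - k) * (m - 1) by rewrite muln_gt0 !subn_gt0 k_lt_m; lia.
have E_le_D : m - 2 * k <= (m - k) * (m - 1) by move: D_gt0; nia.
have small := union_bound_small n_ge1 E_le_D D_gt0 (palette_ratio k_gt0 (erefl m)) budget.
have [R merge] := colourings_merge_nonedges e_sym s_perm s_degen k_lt_m k_gt0 m2k small.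
pose c (i : 'I_L) (v : T) : nat := col e s_perm (R i) v.
have c_proper i u v : e u v -> c i u != c i v.
  exact: col_proper e_sym e_irr s_perm s_degen k_lt_m (R i) u v.
have c_merge u v : u != v -> ~~ e u v -> exists i, c i u = c i v.
  by move=> uv uNv; have [i eq_i] := merge u v uv uNv; exists i; rewrite /c eq_i.
have [phi phi_enc] := encoding_of_colourings e_irr (pos_inj s_perm) c_proper c_merge.
by exists (L + 1); split => //; exists phi.
Qed.
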